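(* Let $\mathcal{N}=\{1,\dots,N\}$, $K\ge1$, $M\ge0$, and let $\underline{\mathsf{d}}$ be uniformly distributed over $\mathcal{N}^K$. For any $s\in\{1,2,\dots,\min\{N,K\}\}$, \[ \bar{R}(M,\mathcal{N},K)\ge \Pr\bigl(w(\underline{\mathsf{d}})\ge s\bigr)\,\bar{R}_s(M,\mathcal{N},s). \]
   Context: Caching problem: a server holds $N$ files of $F$ bits each, connected through a shared error-free link to $K$ users each with a cache of $MF$ bits. In the placement phase each user stores an arbitrary function of the files of at most $MF$ bits; in the delivery phase the users' demand vector $\underline{d}\in\mathcal{N}^K$ is revealed, the server sends a message over the shared link, and each user must reconstruct its requested file from the message and its cache. The rate is message length divided by $F$. $\bar{R}(M,\mathcal{N},K)$ is the optimal expected rate (infimum over all schemes of the expected rate, achievable with vanishing error probability for all large $F$) when the demand vector is uniform over $\mathcal{N}^K$. For a vector $\underline{d}$, $w(\underline{d})$ is the number of distinct entries of $\underline{d}$. For $s\in\{1,\dots,\min\{N,K\}\}$, $\bar{R}_s(M,\mathcal{N},K)$ is the optimal expected rate when the demand vector is uniform over $\mathcal{N}^K$ conditioned on $w(\underline{d})=s$ (both placement and delivery optimized for this conditional distribution). In particular, $\bar{R}_s(M,\mathcal{N},s)$ is the optimal expected rate for $s$ users requesting files chosen uniformly at random from $\mathcal{N}$ without replacement. *)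

From HB Require Import structures.
From mathcomp Require Import all_boot all_order all_algebra.
From mathcomp Require Import boolp classical_sets reals.
Set Implicit Arguments. Unset Strict Implicit. Unset Printing Implicit Defensive.
Import Order.TTheory GRing.Theory Num.Theory.
Local Open Scope ring_scope.

Definition file (F : nat) := {ffun 'I_F -> bool}.
(* The library content: N files (file n is W_{n+1}). *)
Definition library (N F : nat) := {ffun 'I_N -> file F}.
Definition demand (N K : nat) := {ffun 'I_K -> 'I_N}.

Definition w (N K : nat) (d : demand N K) : nat := #|[set d k | k : 'I_K]|.

(* A caching scheme with K users, N files of F bits, cache capacity M F bits.
   - placement: each user k stores phi k W, a bit string of exactly
     cache_len bits, with cache_len <= M F;
   - delivery: for demand d the server sends psi d W, a bit string of exactly
     msg_len d bits (rate for demand d is msg_len d / F);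
   - decoding: user k decodes mu d k X Z, an estimate of W_{d k}. *)
Record scheme (R : realType) (N K F : nat) (M : R) := Scheme {
  cache_len : nat;
  cache_ok : (cache_len%:R <= M * F%:R :> R);
  phi : 'I_K -> library N F -> seq bool;
  phi_size : forall k W, size (phi k W) = cache_len;
  msg_len : demand N K -> nat;
  psi : demand N K -> library N F -> seq bool;
  psi_size : forall d W, size (psi d W) = msg_len d;
  mu : demand N K -> 'I_K -> seq bool -> seq bool -> file F
}.

(* Probability (files i.i.d. uniform) that some user fails to decode under
   demand d. *)
Definition err_prob (R : realType) (N K F : nat) (M : R)
    (S : scheme N K F M) (d : demand N K) : R :=
  #|[pred W : library N F |
      [exists k : 'I_K, mu S d k (psi S d W) (phi S k W) != W (d k)]]|%:R
  / #|{: library N F}|%:R.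

Definition exp_rate (R : realType) (N K F : nat) (M : R)
    (S : scheme N K F M) (D : {set demand N K}) : R :=
  (\sum_(d in D) ((msg_len S d)%:R / F%:R)) / #|D|%:R.

Definition achievable (R : realType) (N K : nat) (M : R)
    (D : {set demand N K}) (r : R) : Prop :=
  forall eps : R, 0 < eps -> exists F0 : nat, forall F : nat, (F0 <= F)%N ->
    (0 < F)%N ->
    exists S : scheme N K F M,
      (forall d, d \in D -> err_prob S d <= eps) /\ exp_rate S D <= r.

Definition opt_rate (R : realType) (N K : nat) (M : R)
    (D : {set demand N K}) : R :=
  inf [set r : R | achievable M D r].

Definition Rbar (R : realType) (N K : nat) (M : R) : R :=
  opt_rate (K := K) (N := N) M [set: demand N K].

Definition Rbar_s (R : realType) (s N K : nat) (M : R) : R :=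
  opt_rate (K := K) (N := N) M [set d : demand N K | w d == s].

Definition prob_w_ge (R : realType) (N K s : nat) : R :=
  #|[set d : demand N K | (s <= w d)%N]|%:R / #|{: demand N K}|%:R.

From HB Require Import structures.
From mathcomp Require Import all_boot all_order all_algebra all_fingroup.
From mathcomp Require Import primitive_action alt.
From mathcomp Require Import boolp classical_sets reals.
From mathcomp Require Import ring.
Import Order.TTheory GRing.Theory Num.Theory.
Set Implicit Arguments. Unset Strict Implicit. Unset Printing Implicit Defensive.

(* Any scheme for K users yields one for s users requesting distinct files.
   A demand with at least s distinct files singles out s users with distinct
   requests (its first s first occurrences) and the injective demand e they
   place.  Relabelling the files by a permutation shows that, for fixed
   selected users, every injective e arises from equally many full demands;
   so picking for each e the cheapest such full demand costs on average no
   more than the average over demands with w >= s, which is at most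
   r / Pr(w >= s) when the original expected rate is r, while the error
   probability does not increase. *)

Lemma perm_extend_inj (T : finType) (s : nat) (e e' : 'I_s -> T) :
  injective e -> injective e' -> exists p : {perm T}, forall j, p (e j) = e' j.
Proof.
move=> inj_e inj_e'.
have dtuple_inj f : injective f -> [tuple f j | j < s] \in s.-dtuple([set: T]%SET).
  by move=> inj_f; apply/dtuple_onP; split=> [i j|i]; rewrite ?inE // !tnth_mktuple => /inj_f.
have sT : (s <= #|T|)%N by rewrite -(card_ord s) -(card_codom inj_e) max_card.
have [p _ p_ee'] :=
  atransP2 (ntransitive_weak sT (Sym_trans T)) (dtuple_inj _ inj_e) (dtuple_inj _ inj_e').
exists p => j; have := congr1 (fun t => tnth t j) p_ee'.
by rewrite /= !tnth_map !tnth_ord_tuple.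
Qed.

Lemma exists_minn_in (T : finType) (A : {set T}) (L : T -> nat) (x0 : T) :
  exists x, forall y, y \in A -> x \in A /\ (L x <= L y)%N.
Proof.
case: (set_0Vmem A) => [->|[y0 y0_in]]; first by exists x0 => y; rewrite inE.
by case: (arg_minnP L y0_in) => x x_in x_min; exists x => y y_in; split; last exact: x_min.
Qed.

Section BalancedFibers.

Variables (T I J : finType) (W : {set T}) (D : {set J}) (g : T -> I) (h : T -> J).

Definition fiber i e := [set x in W | (g x == i) && (h x == e)].

Hypothesis h_in : {in W, forall x, h x \in D}.
Hypothesis fiber_balanced :
  forall i e e', e \in D -> e' \in D -> (#|fiber i e| <= #|fiber i e'|)%N.

Lemma sum_over_fibers (G : T -> nat) :
  \sum_(x in W) G x = \sum_i \sum_(e in D) \sum_(x in fiber i e) G x.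
Proof.
rewrite (partition_big g predT) //; apply: eq_bigr => i _.
rewrite (partition_big h (mem D)) => [|x /andP[/h_in //]].
by apply: eq_bigr => e _; apply: eq_bigl => x; rewrite !inE andbA.
Qed.

(* Choosing the cheapest element of each fiber loses nothing on average,
   because within a fixed [i] every fiber over [D] has the same size. *)
Lemma exists_cheap_section (L : T -> nat) (x0 : T) : x0 \in W ->
  exists i, exists ext : J -> T, (forall e, e \in D -> ext e \in fiber i e) /\
    (#|W| * \sum_(e in D) L (ext e) <= #|D| * \sum_(x in W) L x)%N.
Proof.
move=> x0W.
have /fin_all_exists[ext ext_min] i : exists f : J -> T, forall e y,
    y \in fiber i e -> f e \in fiber i e /\ (L (f e) <= L y)%N.
  exact: fin_all_exists (fun e => exists_minn_in (fiber i e) L x0).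
pose n i := #|fiber i (h x0)|.
have card_fiber i e : e \in D -> #|fiber i e| = n i.
  by move=> eD; apply/eqP; rewrite eqn_leq !fiber_balanced ?h_in.
pose A i := \sum_(e in D) L (ext i e).
have fiber_bound i : (n i * A i <= \sum_(e in D) \sum_(x in fiber i e) L x)%N.
  rewrite big_distrr leq_sum //= => e eD; rewrite -(card_fiber i e eD) -sum_nat_const.
  by apply: leq_sum => y /ext_min[].
have n_gx0 : (0 < n (g x0))%N by apply/card_gt0P; exists x0; rewrite !inE x0W !eqxx.
have [i0 n_i0 A_min] := @arg_minnP _ _ (fun i => 0 < n i)%N A n_gx0.
exists i0, (ext i0); split=> [e eD|].
  have /card_gt0P[y /ext_min[//]] : (0 < #|fiber i0 e|)%N by rewrite card_fiber.
have -> : #|W| = (#|D| * \sum_i n i)%N.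
  rewrite -sum1_card sum_over_fibers big_distrr /=; apply: eq_bigr => i _.
  by rewrite -sum_nat_const; apply: eq_bigr => e eD; rewrite sum1_card card_fiber.
rewrite -mulnA sum_over_fibers big_distrl /= leq_mul //.
have sum_bound : (\sum_i n i * A i <= \sum_i \sum_(e in D) \sum_(x in fiber i e) L x)%N.
  by apply: leq_sum => i _; apply: fiber_bound.
apply: leq_trans sum_bound; apply: leq_sum => i _.
by have [->|/A_min A_le] := posnP (n i); rewrite ?mul0n // leq_mul2l A_le orbT.
Qed.

End BalancedFibers.

Section FirstOccurrences.

Variables (N K : nat).
Implicit Type d : demand N K.

Definition first_occ d : {set 'I_K} :=
  [set k : 'I_K | [forall k' : 'I_K, (k' < k)%N ==> (d k' != d k)]].

Lemma first_occ_inj d : {in first_occ d &, injective d}.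
Proof.
move=> k1 k2; rewrite !inE => /forallP first1 /forallP first2 d12.
case: (ltngtP k1 k2) => [lt12|lt21|/val_inj //].
- by move: (first2 k1); rewrite lt12 d12 eqxx.
- by move: (first1 k2); rewrite lt21 d12 eqxx.
Qed.

Lemma imset_first_occ d : d @: first_occ d = [set d k | k : 'I_K].
Proof.
apply/setP=> v; apply/imsetP/imsetP => [[k _ ->]|[k _ ->]]; first by exists k.
have [k1 /eqP d_k1 k1_min] := @arg_minnP _ k (fun i => d i == d k) val (eqxx _).
exists k1; last by rewrite d_k1.
rewrite inE; apply/forallP => k'; apply/implyP => lt_k'k1; apply/negP => /eqP d_k'.
by have := k1_min k'; rewrite d_k' d_k1 eqxx leqNgt lt_k'k1 => /(_ isT).
Qed.

Lemma card_first_occ d : #|first_occ d| = w d.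
Proof. by rewrite /w -imset_first_occ card_in_imset //; apply: first_occ_inj. Qed.

Definition relabel (p : {perm 'I_N}) d : demand N K := [ffun k => p (d k)].

Lemma first_occ_relabel p d : first_occ (relabel p d) = first_occ d.
Proof.
apply/setP => k; rewrite !inE; apply/eq_forallb => k'.
by rewrite !ffunE (inj_eq perm_inj).
Qed.

Lemma w_relabel p d : w (relabel p d) = w d.
Proof. by rewrite -!card_first_occ first_occ_relabel. Qed.

Lemma relabel_inj p : injective (relabel p).
Proof.
move=> d1 d2 /ffunP eq_d; apply/ffunP => k.
by have := eq_d k; rewrite !ffunE => /perm_inj.
Qed.

End FirstOccurrences.

Lemma full_demandP N s (e : demand N s) : reflect (injective e) (w e == s).
Proof.
have -> : (w e == s) = (#|[set e k | k : 'I_s]| == #|'I_s|) by rewrite card_ord.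
by apply: (iffP imset_injP) => [inj_e i j|inj_e i j _ _]; apply: inj_e.
Qed.

Section Selection.

Variables (N K s : nat) (k0 : 'I_K).
Implicit Type d : demand N K.

(* [k0] is a junk default, never reached when [s <= w d]. *)
Definition select_users d : {ffun 'I_s -> 'I_K} :=
  [ffun j : 'I_s => nth k0 (enum (first_occ d)) j].

Definition selected_demand d : demand N s := [ffun j => d (select_users d j)].

Lemma select_users_relabel p d : select_users (relabel p d) = select_users d.
Proof. by apply/ffunP => j; rewrite !ffunE first_occ_relabel. Qed.

Lemma selected_demand_relabel p d :
  selected_demand (relabel p d) = relabel p (selected_demand d).
Proof. by apply/ffunP => j; rewrite /selected_demand select_users_relabel !ffunE. Qed.

Lemma select_users_first_occ d j : (s <= w d)%N -> select_users d j \in first_occ d.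
Proof.
move=> s_le_w; rewrite ffunE -mem_enum mem_nth //.
by rewrite -cardE card_first_occ (leq_trans (ltn_ord j)).
Qed.

Lemma select_users_inj d : (s <= w d)%N -> injective (select_users d).
Proof.
move=> s_le_w i j; rewrite !ffunE => /eqP.
have size_enum (l : 'I_s) : (l < size (enum (first_occ d)))%N.
  by rewrite -cardE card_first_occ (leq_trans (ltn_ord l)).
by rewrite nth_uniq ?enum_uniq // => /eqP/val_inj.
Qed.

Lemma selected_demand_full d : (s <= w d)%N -> w (selected_demand d) == s.
Proof.
move=> s_le_w; apply/full_demandP => i j d_ij; apply: (select_users_inj s_le_w).
apply: (first_occ_inj (select_users_first_occ _ s_le_w) (select_users_first_occ _ s_le_w)).
by move: d_ij; rewrite !ffunE.
Qed.

End Selection.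

Section SelectionFibers.

Variables (N K s : nat) (k0 : 'I_K).
Let W := [set d : demand N K | s <= w d]%N.
Let Ds := [set e : demand N s | w e == s].

Lemma selected_demand_in : {in W, forall d, selected_demand s k0 d \in Ds}.
Proof. by move=> d; rewrite !inE; apply: selected_demand_full. Qed.

Lemma selection_fibers_balanced sg e e' : e \in Ds -> e' \in Ds ->
  (#|fiber W (select_users s k0) (selected_demand s k0) sg e|
   <= #|fiber W (select_users s k0) (selected_demand s k0) sg e'|)%N.
Proof.
rewrite !inE => /full_demandP inj_e /full_demandP inj_e'.
have [p p_ee'] := perm_extend_inj inj_e inj_e'.
rewrite -(card_imset _ (@relabel_inj N K p)); apply: subset_leq_card.
apply/fintype.subsetP => _ /imsetP[d + ->]; rewrite !inE => /and3P[s_le_w /eqP sel_d /eqP e_d].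
rewrite w_relabel s_le_w select_users_relabel sel_d selected_demand_relabel e_d eqxx /=.
by apply/eqP/ffunP => j; rewrite ffunE.
Qed.

End SelectionFibers.

Local Open Scope ring_scope.

Lemma ler_rate_rescale (R : realFieldType) (a c F nD nW nK : nat) (r : R) :
  (0 < F)%N -> (0 < nD)%N -> (0 < nW)%N -> (0 < nK)%N ->
  (nW * a <= nD * c)%N -> c%:R / (F%:R * nK%:R) <= r ->
  a%:R / (F%:R * nD%:R) <= r / (nW%:R / nK%:R).
Proof.
move=> F_gt0 nD_gt0 nW_gt0 nK_gt0 acW c_le_r.
apply: (@le_trans _ _ (c%:R / (F%:R * nW%:R))).
  rewrite ler_pdivrMr ?mulr_gt0 ?ltr0n // mulrAC ler_pdivlMr ?mulr_gt0 ?ltr0n //.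
  rewrite -!natrM ler_nat mulnCA [X in (_ <= X)%N]mulnCA leq_mul2l.
  by rewrite mulnC [(c * _)%N]mulnC acW orbT.
have -> : c%:R / (F%:R * nW%:R) = c%:R / (F%:R * nK%:R) * (nK%:R / nW%:R) :> R.
  by field; rewrite !pnatr_eq0 -!lt0n F_gt0 nW_gt0 nK_gt0.
by rewrite invf_div ler_wpM2r ?divr_ge0.
Qed.

Section SubScheme.

Variables (R : realType) (N K s F : nat) (M : R) (S : scheme N K F M).
Variables (users : 'I_s -> 'I_K) (ext : demand N s -> demand N K).

Definition sub_scheme : scheme N s F M :=
  @Scheme R N s F M (cache_len S) (cache_ok S)
    (fun j => phi S (users j)) (fun j => phi_size S (users j))
    (fun e => msg_len S (ext e)) (fun e => psi S (ext e))
    (fun e => psi_size S (ext e)) (fun e j => mu S (ext e) (users j)).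

Lemma err_prob_sub_scheme e : (forall j, ext e (users j) = e j) ->
  err_prob sub_scheme e <= err_prob S (ext e).
Proof.
move=> ext_e; rewrite /err_prob ler_wpM2r ?invr_ge0 // ler_nat.
apply: subset_leq_card; apply/fintype.subsetP => W; rewrite !inE => /existsP[j bad_j].
by apply/existsP; exists (users j); rewrite ext_e.
Qed.

End SubScheme.

Lemma exp_rateE (R : realType) N K F (M : R) (S : scheme N K F M) (D : {set demand N K}) :
  exp_rate S D = (\sum_(d in D) msg_len S d)%:R / (F%:R * #|D|%:R).
Proof. by rewrite /exp_rate -mulr_suml -natr_sum invfM mulrA. Qed.

Lemma achievable_distinct_demands (R : realType) N K s (M : R) r :
  (0 < K)%N -> (0 < #|[set d : demand N K | s <= w d]%N|)%N ->
  achievable M [set: demand N K] r ->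
  achievable M [set e : demand N s | w e == s] (r / prob_w_ge R N K s).
Proof.
set W := [set d : demand N K | _]; set Ds := [set e : demand N s | _].
move=> K_gt0 W_gt0 ach_r eps eps_gt0; have [F0 F0_ok] := ach_r eps eps_gt0.
exists F0 => F F_ge F_gt0; have [S [S_err S_rate]] := F0_ok F F_ge F_gt0.
pose k0 := Ordinal K_gt0; have [d0 d0W] := card_gt0P W_gt0.
have [sg [ext [ext_fiber ext_cheap]]] := exists_cheap_section
  (@selected_demand_in N K s k0) (@selection_fibers_balanced N K s k0) (msg_len S) d0W.
have ext_users e : e \in Ds -> forall j, ext e (sg j) = e j.
  move=> /ext_fiber; rewrite !inE => /and3P[_ /eqP sel_ext /eqP sel_e] j.
  by rewrite -[in RHS]sel_e ffunE sel_ext.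
exists (sub_scheme S sg ext); split=> [e e_in|].
  exact: le_trans (err_prob_sub_scheme S (ext_users e e_in)) (S_err _ (finset.in_setT _)).
move: S_rate; rewrite !exp_rateE cardsT /prob_w_ge => S_rate.
apply: (ler_rate_rescale F_gt0 _ W_gt0 _ _ S_rate).
- by apply/card_gt0P; exists (selected_demand s k0 d0); apply: selected_demand_in.
- exact: leq_trans W_gt0 (max_card _).
apply: leq_trans ext_cheap _; rewrite leq_mul2l; apply/orP; right.
by apply: sub_le_big => [n|m n|d _]; rewrite ?leq_addr ?finset.in_setT.
Qed.

Lemma exp_rate_ge0 (R : realType) N K F (M : R) (S : scheme N K F M) (D : {set demand N K}) :
  0 <= exp_rate S D.
Proof. by rewrite exp_rateE divr_ge0 ?mulr_ge0. Qed.

Lemma achievable_ge0 (R : realType) N K (M : R) (D : {set demand N K}) r :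
  achievable M D r -> 0 <= r.
Proof.
move=> /(_ 1 ltr01)[F0 /(_ F0.+1 (leqnSn _) isT)[S [_ rate_le]]].
exact: le_trans (exp_rate_ge0 S D) rate_le.
Qed.

Section Uncoded.

Variables (R : realType) (N K F : nat) (M : R).
Hypothesis M_ge0 : 0 <= M.

Let bits := enum {: 'I_N * 'I_F}.

Definition uncoded_scheme : scheme N K F M :=
  @Scheme R N K F M 0 (mulr_ge0 M_ge0 (ler0n _ F)) (fun _ _ => [::]) (fun _ _ => erefl)
    (fun _ => size bits) (fun _ W => [seq W p.1 p.2 | p <- bits])
    (fun _ _ => size_map _ _)
    (fun d k X _ => [ffun i => nth false X (index (d k, i) bits)]).

Lemma err_prob_uncoded d : err_prob uncoded_scheme d = 0.
Proof.
rewrite /err_prob eq_card0 ?mul0r // => W; rewrite inE.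
apply/existsP => -[k]; apply/negP; rewrite negbK; apply/eqP/ffunP => i; rewrite /= ffunE.
have bit_in : (d k, i) \in bits by rewrite mem_enum.
by rewrite (nth_map (d k, i)) ?index_mem // nth_index.
Qed.

Lemma exp_rate_uncoded (D : {set demand N K}) : (0 < F)%N ->
  exp_rate uncoded_scheme D <= N%:R.
Proof.
move=> F_gt0; have [D_eq0|D_gt0] := posnP #|D|.
  by rewrite exp_rateE D_eq0 mulr0 invr0 mulr0.
rewrite exp_rateE sum_nat_const /= /bits -cardE card_prod !card_ord.
by rewrite ler_pdivrMr ?mulr_gt0 ?ltr0n // -!natrM ler_nat mulnC mulnA.
Qed.

End Uncoded.

Lemma achievable_uncoded (R : realType) N K (M : R) (D : {set demand N K}) :
  0 <= M -> achievable M D N%:R.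
Proof.
move=> M_ge0 eps eps_gt0; exists 0%N => F _ F_gt0.
exists (@uncoded_scheme R N K F M M_ge0); split; last exact: exp_rate_uncoded.
by move=> d _; rewrite err_prob_uncoded ltW.
Qed.

Unset Implicit Arguments.

Theorem lemma1 (R : realType) (N K : nat) (M : R) (s : nat) :
  (1 <= K)%N -> 0 <= M -> (1 <= s)%N -> (s <= minn N K)%N ->
  Rbar N K M >= prob_w_ge R N K s * Rbar_s s N s M.
Proof.
(* The argument works for every [s]. *)
move=> K_gt0 M_ge0 _ _.
have achN : nonempty [set r : R | achievable M [set: demand N K] r].
  by exists N%:R; apply: achievable_uncoded.
rewrite /Rbar /opt_rate; apply: lb_le_inf => // r ach_r.
have [W_eq0|W_gt0] := posnP #|[set d : demand N K | s <= w d]%N|.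
  by rewrite /prob_w_ge W_eq0 !mul0r; apply: achievable_ge0 ach_r.
have P_gt0 : 0 < prob_w_ge R N K s.
  by rewrite /prob_w_ge divr_gt0 ?ltr0n // (leq_trans W_gt0 (max_card _)).
rewrite mulrC -ler_pdivlMr //; apply: ge_inf.
  by exists 0 => x /achievable_ge0.
exact: achievable_distinct_demands.
Qed.
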